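(* Let $(X,\mathcal{T})$ be a finite topological space with furtherness function $\Psi$. The collection $\mathcal{B}^+=\{B^+(x,n)\mid x\in X,\ n\in\mathbb{N}\}$ of forward open balls $B^+(x,n)=\{y\in X\mid \Psi(x,y)<n\}$ is a basis for a topology on $X$, and this topology equals $\mathcal{T}$.
   Context: Here $\mathbb{N}=\{1,2,3,\dots\}$. For a finite topological space $X$ and $x\in X$, $U_x$ denotes the minimal open set containing $x$. A nested sequence of open sets around $x$ is a finite sequence $U_0\subsetneq U_1\subsetneq\cdots\subsetneq U_m=X$ of open sets with $U_0=U_x$ such that for each $j$ there is no open set $V$ with $U_j\subsetneq V\subsetneq U_{j+1}$. The furtherness function $\Psi:X\times X\to\{0,1,\dots,|X|-1\}$ is defined by: $\Psi(x,y)$ is the smallest integer $k\ge 0$ such that there exists a nested sequence $(U_j)_{j\ge0}$ of open sets around $x$ with $y\in U_k$. *)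

From mathcomp Require Import all_boot.
Set Implicit Arguments. Unset Strict Implicit. Unset Printing Implicit Defensive.

(* A finite topological space: a finType T with a family O of open sets
   containing set0, setT, closed under binary unions and intersections
   (equivalent to arbitrary unions/intersections since T is finite). *)
Definition is_topology (T : finType) (O : {set {set T}}) : Prop :=
  [/\ set0 \in O, setT \in O,
      (forall U V, U \in O -> V \in O -> U :|: V \in O) &
      (forall U V, U \in O -> V \in O -> U :&: V \in O)].

Definition Umin (T : finType) (O : {set {set T}}) (x : T) : {set T} :=
  \bigcap_(U in O | x \in U) U.

Definition nested_seq (T : finType) (O : {set {set T}}) (x : T)
    (s : seq {set T}) : Prop :=
  [/\ 0 < size s,
      nth set0 s 0 = Umin O x,
      last set0 s = setT,
      (forall U, U \in s -> U \in O) &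
      (forall j, j.+1 < size s ->
         nth set0 s j \proper nth set0 s j.+1 /\
         ~ (exists V, [/\ V \in O, nth set0 s j \proper V &
                          V \proper nth set0 s j.+1]))].

Definition is_furtherness (T : finType) (O : {set {set T}})
    (Psi : T -> T -> nat) : Prop :=
  forall x y,
    (exists s, [/\ nested_seq O x s, Psi x y < size s &
                   y \in nth set0 s (Psi x y)]) /\
    (forall s k, nested_seq O x s -> k < size s -> y \in nth set0 s k ->
       Psi x y <= k).

Definition fball (T : finType) (Psi : T -> T -> nat) (x : T) (n : nat)
  : {set T} := [set y | Psi x y < n].

(* B is a member of the family B^+ = {B^+(x,n) | x in X, n in N = {1,2,..}} *)
Definition in_fballs (T : finType) (Psi : T -> T -> nat) (B : {set T})
  : Prop := exists x n, 0 < n /\ B = fball Psi x n.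

Definition is_basis (T : finType) (Bs : {set T} -> Prop) : Prop :=
  (forall x : T, exists B, Bs B /\ x \in B) /\
  (forall B1 B2 x, Bs B1 -> Bs B2 -> x \in B1 :&: B2 ->
     exists B3, [/\ Bs B3, x \in B3 & B3 \subset B1 :&: B2]).

Definition generated_open (T : finType) (Bs : {set T} -> Prop) (U : {set T})
  : Prop := forall x, x \in U -> exists B, [/\ Bs B, x \in B & B \subset U].

(* In a finite space every point x has a smallest open neighbourhood U_x, and
   the open sets are exactly the sets containing U_y for each of their points y.
   A forward ball B^+(x,n) is open: if Psi x y < n, the member of a nested
   sequence around x realising Psi x y is an open set containing y, hence
   containing U_y, and all its points z satisfy Psi x z <= Psi x y.  Moreover
   B^+(x,1) = U_x, since the 0-th member of every nested sequence around x is
   U_x.  So B^+ is a family of open sets containing every U_x, and any such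
   family is a basis of the topology. *)
From mathcomp Require Import all_boot.

Set Implicit Arguments.
Unset Strict Implicit.
Unset Printing Implicit Defensive.

Section MinimalOpen.
Variables (T : finType) (O : {set {set T}}).
Hypothesis hO : is_topology O.

Lemma Umin_open x : Umin O x \in O.
Proof.
case: hO => _ OT _ OI.
by apply: (big_ind (fun U => U \in O)) => // U /andP[].
Qed.

Lemma mem_Umin x : x \in Umin O x.
Proof. by apply/bigcapP => U /andP[]. Qed.

Lemma Umin_sub (U : {set T}) x : U \in O -> x \in U -> Umin O x \subset U.
Proof. by move=> OU Ux; apply: bigcap_inf; rewrite OU Ux. Qed.

Lemma open_Umin_sub (A : {set T}) :
  (forall y, y \in A -> Umin O y \subset A) -> A \in O.
Proof.
move=> UminA.
have -> : A = \bigcup_(y in A) Umin O y.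
  apply/setP => z; apply/idP/bigcupP => [Az | [y Ay]].
    by exists z; rewrite ?mem_Umin.
  exact: subsetP (UminA y Ay) z.
case: hO => O0 _ OU _.
by apply: (big_ind (fun U => U \in O)) => // y _; apply: Umin_open.
Qed.

Lemma basis_of_Umin (Bs : {set T} -> Prop) :
    (forall B, Bs B -> B \in O) -> (forall x, Bs (Umin O x)) ->
  is_basis Bs /\ (forall U, U \in O <-> generated_open Bs U).
Proof.
move=> BsO BsUmin; split; first split.
- by move=> x; exists (Umin O x); rewrite mem_Umin.
- move=> B1 B2 x B1B B2B B12x; exists (Umin O x); split; rewrite ?mem_Umin //.
  case: hO => _ _ _ OI.
  by apply: Umin_sub => //; apply: OI; apply: BsO.
move=> U; split=> [OU x Ux | genU].
  by exists (Umin O x); rewrite mem_Umin Umin_sub.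
apply: open_Umin_sub => y Uy.
have [B [BsB By BU]] := genU y Uy.
exact: subset_trans (Umin_sub (BsO B BsB) By) BU.
Qed.

End MinimalOpen.

Section ForwardBalls.
Variables (T : finType) (O : {set {set T}}) (Psi : T -> T -> nat).
Hypotheses (hO : is_topology O) (hPsi : is_furtherness O Psi).

Lemma fball_open x n : fball Psi x n \in O.
Proof.
apply: open_Umin_sub => // y; rewrite inE => Psi_y.
have [[s [nested_s Psi_s s_y]] _] := hPsi x y.
have [_ _ _ sO _] := nested_s.
have O_sy : nth set0 s (Psi x y) \in O by apply/sO/mem_nth.
apply: subset_trans (Umin_sub O_sy s_y) _.
apply/subsetP => z s_z; rewrite inE.
have [_ Psi_min] := hPsi x z.
exact: leq_ltn_trans (Psi_min _ _ nested_s Psi_s s_z) Psi_y.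
Qed.

Lemma fball1_Umin x : fball Psi x 1 = Umin O x.
Proof.
apply/eqP; rewrite eqEsubset; apply/andP; split.
  apply/subsetP => y; rewrite inE ltnS leqn0 => /eqP Psi_y.
  have [[s [[_ s0 _ _ _] _ s_y]] _] := hPsi x y.
  by rewrite -s0 -Psi_y.
apply: Umin_sub; rewrite ?fball_open // inE ltnS.
have [[s [nested_s _ _]] Psi_min] := hPsi x x.
have [s_gt0 s0 _ _ _] := nested_s.
by apply: Psi_min nested_s s_gt0 _; rewrite s0 mem_Umin.
Qed.

End ForwardBalls.

Theorem mainTheorem11 (T : finType) (O : {set {set T}}) (Psi : T -> T -> nat)
    (hO : is_topology O) (hPsi : is_furtherness O Psi) :
  is_basis (in_fballs Psi) /\
  (forall U : {set T}, U \in O <-> generated_open (in_fballs Psi) U).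
Proof.
apply: basis_of_Umin => // [B [x [n [_ ->]]] | x].
  exact: fball_open.
by exists x, 1; rewrite (fball1_Umin hO hPsi).
Qed.
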